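(* Let $M$ be a finitely generated monoid and let $I$ be an ideal of $M$. If $M$ is strongly $\delta$-hyperbolic (with respect to some finite generating set, for some real $\delta\ge 0$) then the Rees quotient $M/I$ is strongly hyperbolic.
   Context: Directed graphs may have loops and multiple edges; $d(u,v)$ is the length of a shortest directed path from $u$ to $v$ ($\infty$ if none). Out-ball $\overrightarrow{\mathcal{B}}_r(x)=\{y : d(x,y)\le r\}$, in-ball $\overleftarrow{\mathcal{B}}_r(x)=\{y : d(y,x)\le r\}$, extended to sets by union. A path $[x_0,\dots,x_n]$ is a geodesic if $n=d(x_0,x_n)$. A directed geodesic triangle is an ordered triple $(p,q,r)$ of geodesics with the end of $p$ equal to the start of $q$ and $p\circ q$ having the same start and end as $r$; it is $\delta$-thin if every vertex of $r$ lies in $\overrightarrow{\mathcal{B}}_\delta(p)\cup\overleftarrow{\mathcal{B}}_\delta(q)$, every vertex of $p$ lies in $\overrightarrow{\mathcal{B}}_\delta(r)\cup\overleftarrow{\mathcal{B}}_\delta(q)$, and every vertex of $q$ lies in $\overrightarrow{\mathcal{B}}_\delta(p)\cup\overleftarrow{\mathcal{B}}_\delta(r)$. A directed graph is strongly $\delta$-hyperbolic if all its directed geodesic triangles are $\delta$-thin. A monoid generated by a finite set $A$ is strongly $\delta$-hyperbolic w.r.t. $A$ if its right Cayley graph (vertex set the monoid, edge $m\to n$ for each $a\in A$ with $ma=n$) is strongly $\delta$-hyperbolic; it is strongly hyperbolic if this holds for some finite generating set and some $\delta$. The Rees quotient $M/I$ is $(M\setminus I)\cup\{0\}$ with the product of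 $x,y$ equal to $xy$ if $xy\notin I$ and $0$ otherwise (and $0$ a zero element). *)

From Stdlib Require Import Reals List Classical ClassicalEpsilon.
Import ListNotations.
Set Implicit Arguments.
Open Scope R_scope.

(** Loops / multiple edges are irrelevant for distances and geodesics, so a
    directed (multi)graph is represented by its edge relation [E u v]
    ("there is at least one edge u -> v"). *)

Section Graphs.
Variable V : Type.
Variable E : V -> V -> Prop.

Fixpoint chain (x : V) (l : list V) : Prop :=
  match l with
  | [] => True
  | y :: l' => E x y /\ chain y l'
  end.

(** A path [x0; ...; xn] is represented as the pair (x0, [x1; ...; xn]). *)
Definition path_start (p : V * list V) : V := fst p.
Definition path_end (p : V * list V) : V := last (snd p) (fst p).
Definition path_len (p : V * list V) : nat := length (snd p).
Definition is_path (p : V * list V) : Prop := chain (fst p) (snd p).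
Definition on_path (v : V) (p : V * list V) : Prop := In v (fst p :: snd p).

Definition dist_le (u v : V) (n : nat) : Prop :=
  exists l : list V, chain u l /\ last l u = v /\ (length l <= n)%nat.

Definition geodesic (p : V * list V) : Prop :=
  is_path p /\ forall m : nat, dist_le (path_start p) (path_end p) m ->
                              (path_len p <= m)%nat.

Definition dist_le_R (u v : V) (delta : R) : Prop :=
  exists n : nat, INR n <= delta /\ dist_le u v n.

Definition in_out_ball (delta : R) (p : V * list V) (y : V) : Prop :=
  exists x, on_path x p /\ dist_le_R x y delta.
Definition in_in_ball (delta : R) (p : V * list V) (y : V) : Prop :=
  exists x, on_path x p /\ dist_le_R y x delta.

Definition geodesic_triangle (p q r : V * list V) : Prop :=
  geodesic p /\ geodesic q /\ geodesic r /\
  path_end p = path_start q /\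
  path_start r = path_start p /\ path_end r = path_end q.

Definition thin_triangle (delta : R) (p q r : V * list V) : Prop :=
  (forall v, on_path v r -> in_out_ball delta p v \/ in_in_ball delta q v) /\
  (forall v, on_path v p -> in_out_ball delta r v \/ in_in_ball delta q v) /\
  (forall v, on_path v q -> in_out_ball delta p v \/ in_in_ball delta r v).

Definition strongly_hyperbolic_graph (delta : R) : Prop :=
  forall p q r, geodesic_triangle p q r -> thin_triangle delta p q r.

End Graphs.

Section Monoids.
Variable M : Type.
Variable mul : M -> M -> M.
Variable one : M.

Definition is_monoid : Prop :=
  (forall x y z, mul x (mul y z) = mul (mul x y) z) /\
  (forall x, mul one x = x) /\ (forall x, mul x one = x).

Definition generates (A : list M) : Prop :=
  forall m : M, exists w : list M, (forall a, In a w -> In a A) /\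
                                   m = fold_left mul w one.

Definition finitely_generated : Prop := exists A : list M, generates A.

Definition cayley_edge (A : list M) (m n : M) : Prop :=
  exists a, In a A /\ mul m a = n.

Definition strongly_delta_hyperbolic_wrt (A : list M) (delta : R) : Prop :=
  generates A /\ 0 <= delta /\ strongly_hyperbolic_graph (cayley_edge A) delta.

Definition strongly_hyperbolic_monoid : Prop :=
  exists (A : list M) (delta : R), strongly_delta_hyperbolic_wrt A delta.

Definition is_ideal (I : M -> Prop) : Prop :=
  (exists x, I x) /\ (forall x y, I x -> I (mul x y)) /\ (forall x y, I y -> I (mul x y)).

End Monoids.

(** * Rees quotient M/I: carrier (M \ I) ∪ {0}, with 0 represented by [None]. *)
Section Rees.
Variable M : Type.
Variable mul : M -> M -> M.
Variable one : M.
Variable I : M -> Prop.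

Definition rees_ok (o : option M) : Prop :=
  match o with None => True | Some x => ~ I x end.

Definition Rees : Type := { o : option M | rees_ok o }.

Definition rees_norm (o : option M) : option M :=
  match o with
  | Some a => if excluded_middle_informative (I a) then None else Some a
  | None => None
  end.

Lemma rees_norm_ok (o : option M) : rees_ok (rees_norm o).
Proof.
  destruct o as [a|]; simpl; auto.
  destruct (excluded_middle_informative (I a)); simpl; auto.
Qed.

Definition rees_mul_raw (x y : option M) : option M :=
  match x, y with
  | Some a, Some b => rees_norm (Some (mul a b))
  | _, _ => None
  end.

Definition rees_mul (x y : Rees) : Rees :=
  exist _ (rees_mul_raw (proj1_sig x) (proj1_sig y))
    (match proj1_sig x as ox, proj1_sig y as oy
       return rees_ok (rees_mul_raw ox oy) with
     | Some a, Some b => rees_norm_ok (Some (mul a b))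
     | Some _, None => Logic.I
     | None, _ => Logic.I
     end).

Definition rees_one : Rees := exist _ (rees_norm (Some one)) (rees_norm_ok _).

End Rees.

(* The Cayley graph of M/I with respect to the generators 0 and the images of
   the generators A of M has two kinds of vertices.  Since 0 absorbs, every
   directed path ending at a nonzero vertex stays in M \ I, and there the graph
   is a copy of the Cayley graph of M with the same distances (paths of M are
   pushed to M/I by the quotient map); so geodesic triangles ending at a
   nonzero vertex are delta-thin.  Every vertex has an edge to 0, so geodesics
   ending at 0 have length at most 1, and triangles ending at 0 are 1-thin. *)

From Stdlib Require Import Reals List Classical ClassicalEpsilon Lra Lia.
Import ListNotations.
Set Implicit Arguments.
Open Scope R_scope.

Lemma last_cons (T : Type) (x y : T) (l : list T) : last (y :: l) x = last l y.
Proof.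
  revert x y; induction l as [|z l IH]; intros x y; [reflexivity|].
  change (last (y :: z :: l) x) with (last (z :: l) x); rewrite !IH; reflexivity.
Qed.

Lemma last_map (S T : Type) (f : S -> T) (l : list S) (x : S) :
  last (map f l) (f x) = f (last l x).
Proof.
  revert x; induction l as [|y l IH]; intros x; [reflexivity|].
  simpl map; rewrite !last_cons; apply IH.
Qed.

Lemma In_last (T : Type) (l : list T) (x : T) : In (last l x) (x :: l).
Proof.
  revert x; induction l as [|y l IH]; intros x; [left; reflexivity|].
  rewrite last_cons; right; apply IH.
Qed.

Section GraphFacts.
Variables (V : Type) (E : V -> V -> Prop).

Lemma dist_le_R_refl (x : V) (delta : R) : 0 <= delta -> dist_le_R E x x delta.
Proof. intros Hd; exists 0%nat; split; [simpl; lra | exists []; simpl; auto]. Qed.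

Lemma dist_le_R_mono (x y : V) (delta delta' : R) :
  delta <= delta' -> dist_le_R E x y delta -> dist_le_R E x y delta'.
Proof. intros Hle [n [Hn Hd]]; exists n; split; [lra | exact Hd]. Qed.

Lemma thin_triangle_mono (delta delta' : R) (p q r : V * list V) :
  delta <= delta' -> thin_triangle E delta p q r -> thin_triangle E delta' p q r.
Proof.
  intros Hle.
  assert (Hout : forall P y, in_out_ball E delta P y -> in_out_ball E delta' P y)
    by (intros P y [x [Hx Hd]]; exists x; split; [exact Hx | exact (dist_le_R_mono Hle Hd)]).
  assert (Hin : forall P y, in_in_ball E delta P y -> in_in_ball E delta' P y)
    by (intros P y [x [Hx Hd]]; exists x; split; [exact Hx | exact (dist_le_R_mono Hle Hd)]).
  intros [T1 [T2 T3]]; split; [|split]; intros v Hv;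
    [destruct (T1 v Hv) | destruct (T2 v Hv) | destruct (T3 v Hv)];
    [left; apply Hout | right; apply Hin | left; apply Hout
    | right; apply Hin | left; apply Hout | right; apply Hin]; assumption.
Qed.

Lemma start_on_path (P : V * list V) : on_path (path_start P) P.
Proof. left; reflexivity. Qed.

Lemma end_on_path (P : V * list V) : on_path (path_end P) P.
Proof. apply In_last. Qed.

Lemma on_short_path (P : V * list V) (v : V) :
  (path_len P <= 1)%nat -> on_path v P -> v = path_start P \/ v = path_end P.
Proof.
  destruct P as [u [|w [|w' l]]]; unfold path_len, on_path, path_start, path_end;
    simpl; intros Hlen Hv.
  - destruct Hv as [<-|[]]; left; reflexivity.
  - destruct Hv as [<-|[<-|[]]]; [left | right]; reflexivity.
  - lia.
Qed.

Section UniversalSink.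
Variable z : V.
Hypothesis edge_to_z : forall u, E u z.

Lemma dist_le_to_sink (u : V) : dist_le E u z 1.
Proof. exists [z]; simpl; repeat split; auto. Qed.

Lemma geodesic_to_sink_short (P : V * list V) :
  geodesic E P -> path_end P = z -> (path_len P <= 1)%nat.
Proof. intros [_ Hmin] Hend; apply Hmin; rewrite Hend; apply dist_le_to_sink. Qed.

Lemma thin_triangle_at_sink (delta : R) (p q r : V * list V) :
  1 <= delta -> geodesic_triangle E p q r -> path_end r = z ->
  thin_triangle E delta p q r.
Proof.
  intros Hd [_ [Gq [Gr [Hpq [Hsr Her]]]]] Hz.
  assert (Hq : path_end q = z) by congruence.
  assert (Hd0 : 0 <= delta) by lra.
  split; [|split]; intros v Hv.
  - destruct (on_short_path (geodesic_to_sink_short Gr Hz) Hv) as [-> | ->].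
    + left; exists (path_start p); split; [apply start_on_path|].
      rewrite Hsr; apply dist_le_R_refl; exact Hd0.
    + right; exists (path_end q); split; [apply end_on_path|].
      rewrite Her; apply dist_le_R_refl; exact Hd0.
  - right; exists (path_end q); split; [apply end_on_path|].
    exists 1%nat; split; [simpl; lra | rewrite Hq; apply dist_le_to_sink].
  - destruct (on_short_path (geodesic_to_sink_short Gq Hq) Hv) as [-> | ->].
    + left; exists (path_end p); split; [apply end_on_path|].
      rewrite Hpq; apply dist_le_R_refl; exact Hd0.
    + right; exists (path_end r); split; [apply end_on_path|].
      rewrite Her; apply dist_le_R_refl; exact Hd0.
Qed.

End UniversalSink.
End GraphFacts.

Definition path_map (V W : Type) (f : V -> W) (P : V * list V) : W * list W :=
  (f (fst P), map f (snd P)).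

Lemma path_end_map (V W : Type) (f : V -> W) (P : V * list V) :
  path_end (path_map f P) = f (path_end P).
Proof. apply last_map. Qed.

Lemma on_path_map (V W : Type) (f : V -> W) (P : V * list V) (v : V) :
  on_path v P -> on_path (f v) (path_map f P).
Proof. intros [<-|Hv]; [left; reflexivity | right; apply in_map; exact Hv]. Qed.

Lemma on_path_map_inv (V W : Type) (f : V -> W) (P : V * list V) (x : W) :
  on_path x (path_map f P) -> exists v, on_path v P /\ f v = x.
Proof.
  intros [<-|Hx]; [exists (fst P); split; [left|]; reflexivity|].
  apply in_map_iff in Hx; destruct Hx as [v [<- Hv]]; exists v; split; [right|]; auto.
Qed.

Lemma chain_map_in {V W : Type} {E : V -> V -> Prop} {F : W -> W -> Prop}
    (N : V -> Prop) (f : V -> W) :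
  (forall u v, E u v -> N v -> F (f u) (f v)) ->
  forall l u, chain E u l -> (forall v, In v l -> N v) -> chain F (f u) (map f l).
Proof.
  intros Hf; induction l as [|y l IH]; intros u Hc Hl; simpl; auto.
  destruct Hc as [He Hc]; split.
  - apply Hf; [exact He | apply Hl; left; reflexivity].
  - apply IH; [exact Hc | intros v Hv; apply Hl; right; exact Hv].
Qed.

Lemma dist_le_map {V W : Type} {E : V -> V -> Prop} {F : W -> W -> Prop} (f : V -> W) :
  (forall u v, E u v -> F (f u) (f v)) ->
  forall u v n, dist_le E u v n -> dist_le F (f u) (f v) n.
Proof.
  intros Hf u v n [l [Hc [Hl Hn]]]; exists (map f l); repeat split.
  - exact (chain_map_in (fun _ => True) f (fun u v He _ => Hf u v He) l u Hc (fun _ _ => Logic.I)).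
  - rewrite last_map, Hl; reflexivity.
  - rewrite length_map; exact Hn.
Qed.

(* [N] is a set of vertices of [E] closed under predecessors on which [E] is a
   copy of [F], via [h] with inverse [g]; [g] may send further points of [W]
   outside [N], provided it stays a graph morphism. *)
Section ClosedSubgraph.
Variables (V W : Type) (E : V -> V -> Prop) (F : W -> W -> Prop).
Variables (N : V -> Prop) (h : V -> W) (g : W -> V).
Hypothesis N_pred_closed : forall u v, E u v -> N v -> N u.
Hypothesis h_edge : forall u v, E u v -> N v -> F (h u) (h v).
Hypothesis g_edge : forall x y, F x y -> E (g x) (g y).
Hypothesis g_h : forall u, N u -> g (h u) = u.

Lemma chain_pred_closed (l : list V) (u : V) :
  chain E u l -> N (last l u) -> forall v, In v (u :: l) -> N v.
Proof.
  revert u; induction l as [|y l IH]; intros u Hc Hn v Hv.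
  - destruct Hv as [<-|[]]; exact Hn.
  - destruct Hc as [He Hc]; rewrite last_cons in Hn.
    destruct Hv as [<-|Hv]; [|exact (IH y Hc Hn v Hv)].
    exact (N_pred_closed He (IH y Hc Hn y (or_introl eq_refl))).
Qed.

Lemma path_pred_closed (P : V * list V) :
  is_path E P -> N (path_end P) -> forall v, on_path v P -> N v.
Proof. apply chain_pred_closed. Qed.

Lemma dist_le_R_lift (u v : V) (delta : R) :
  N u -> N v -> dist_le_R F (h u) (h v) delta -> dist_le_R E u v delta.
Proof.
  intros Hu Hv [n [Hn Hd]]; exists n; split; [exact Hn|].
  rewrite <- (g_h Hu), <- (g_h Hv); exact (dist_le_map g g_edge Hd).
Qed.

Lemma geodesic_lift (P : V * list V) :
  geodesic E P -> N (path_end P) -> geodesic F (path_map h P).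
Proof.
  intros [Hp Hmin] Hn; pose proof (path_pred_closed Hp Hn) as HN.
  split.
  - apply (chain_map_in N h h_edge); [exact Hp|].
    intros v Hv; apply HN; right; exact Hv.
  - intros m Hd; unfold path_len, path_map; simpl; rewrite length_map.
    apply Hmin; rewrite path_end_map in Hd.
    rewrite <- (g_h (HN _ (start_on_path P))), <- (g_h Hn).
    exact (dist_le_map g g_edge Hd).
Qed.

Lemma in_out_ball_lift (delta : R) (P : V * list V) (y : V) :
  (forall v, on_path v P -> N v) -> N y ->
  in_out_ball F delta (path_map h P) (h y) -> in_out_ball E delta P y.
Proof.
  intros HN Hy [x [Hx Hd]]; destruct (on_path_map_inv Hx) as [v [Hv <-]].
  exists v; split; [exact Hv | exact (dist_le_R_lift (HN v Hv) Hy Hd)].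
Qed.

Lemma in_in_ball_lift (delta : R) (P : V * list V) (y : V) :
  (forall v, on_path v P -> N v) -> N y ->
  in_in_ball F delta (path_map h P) (h y) -> in_in_ball E delta P y.
Proof.
  intros HN Hy [x [Hx Hd]]; destruct (on_path_map_inv Hx) as [v [Hv <-]].
  exists v; split; [exact Hv | exact (dist_le_R_lift Hy (HN v Hv) Hd)].
Qed.

Lemma thin_triangle_lift (delta : R) (p q r : V * list V) :
  strongly_hyperbolic_graph F delta -> geodesic_triangle E p q r -> N (path_end r) ->
  thin_triangle E delta p q r.
Proof.
  intros Hhyp [Gp [Gq [Gr [Hpq [Hsr Her]]]]] Hr.
  assert (Hq : N (path_end q)) by (rewrite <- Her; exact Hr).
  pose proof (path_pred_closed (proj1 Gq) Hq) as Nq.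
  assert (Hp : N (path_end p)) by (rewrite Hpq; apply Nq, start_on_path).
  pose proof (path_pred_closed (proj1 Gp) Hp) as Np.
  pose proof (path_pred_closed (proj1 Gr) Hr) as Nr.
  assert (Ht : geodesic_triangle F (path_map h p) (path_map h q) (path_map h r)).
  { repeat split; try (apply geodesic_lift; assumption);
      rewrite ?path_end_map; unfold path_start in *; simpl; congruence. }
  destruct (Hhyp _ _ _ Ht) as [T1 [T2 T3]].
  split; [|split]; intros v Hv;
    [destruct (T1 _ (on_path_map h Hv)) | destruct (T2 _ (on_path_map h Hv))
    | destruct (T3 _ (on_path_map h Hv))];
    solve [left; eapply in_out_ball_lift; eauto | right; eapply in_in_ball_lift; eauto].
Qed.

End ClosedSubgraph.

Section ReesQuotient.
Variables (M : Type) (mul : M -> M -> M) (one : M) (I : M -> Prop).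
Hypothesis I_ideal : is_ideal mul I.

Lemma rees_eq (u v : Rees I) : proj1_sig u = proj1_sig v -> u = v.
Proof.
  destruct u as [a ha], v as [b hb]; simpl; intros ->; f_equal; apply proof_irrelevance.
Qed.

Definition rees_zero : Rees I := exist (rees_ok I) None Logic.I.

Definition rees_proj (x : M) : Rees I := exist (rees_ok I) (rees_norm I (Some x)) (rees_norm_ok I _).

(* [one] is a junk value for the image of 0. *)
Definition rees_lift (u : Rees I) : M :=
  match proj1_sig u with Some x => x | None => one end.

Definition rees_nonzero (u : Rees I) : Prop := proj1_sig u <> None.

Definition rees_gens (A : list M) : list (Rees I) := rees_zero :: map rees_proj A.

Lemma rees_proj_mul (x y : M) :
  rees_mul mul (rees_proj x) (rees_proj y) = rees_proj (mul x y).
Proof.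
  destruct I_ideal as [_ [HL HR]]; apply rees_eq.
  unfold rees_mul, rees_proj, rees_mul_raw, rees_norm; simpl.
  destruct (excluded_middle_informative (I x)), (excluded_middle_informative (I y)),
    (excluded_middle_informative (I (mul x y))); simpl; auto; exfalso; auto.
Qed.

Lemma rees_proj_lift (u : Rees I) : rees_nonzero u -> rees_proj (rees_lift u) = u.
Proof.
  destruct u as [[x|] hx]; unfold rees_nonzero; simpl; intros Hn; [|congruence].
  apply rees_eq; unfold rees_lift, rees_norm; simpl.
  destruct (excluded_middle_informative (I x)); [contradiction | reflexivity].
Qed.

Lemma rees_mul_zero_r (u : Rees I) : rees_mul mul u rees_zero = rees_zero.
Proof. apply rees_eq; simpl; destruct (proj1_sig u); reflexivity. Qed.

Lemma rees_proj_fold (w : list M) (x : M) :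
  fold_left (@rees_mul M mul I) (map rees_proj w) (rees_proj x) = rees_proj (fold_left mul w x).
Proof.
  revert x; induction w as [|a w IH]; intros x; simpl; [reflexivity|].
  rewrite rees_proj_mul; apply IH.
Qed.

Lemma rees_not_nonzero (u : Rees I) : ~ rees_nonzero u -> u = rees_zero.
Proof. intros Hu; apply rees_eq, NNPP, Hu. Qed.

Lemma rees_generates (A : list M) :
  generates mul one A -> generates (@rees_mul M mul I) (rees_one one I) (rees_gens A).
Proof.
  intros Hgen u; destruct (classic (rees_nonzero u)) as [Hu | Hu].
  - destruct (Hgen (rees_lift u)) as [w [Hw Hx]].
    exists (map rees_proj w); split.
    + intros a Ha; apply in_map_iff in Ha; destruct Ha as [b [<- Hb]].
      right; apply in_map, Hw, Hb.
    + change (rees_one one I) with (rees_proj one).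
      rewrite rees_proj_fold, <- Hx, rees_proj_lift; auto.
  - exists [rees_zero]; split; [intros a [<-|[]]; left; reflexivity|].
    simpl; rewrite rees_mul_zero_r; apply rees_not_nonzero, Hu.
Qed.

Section CayleyGraph.
Variable A : list M.
Let E := cayley_edge (@rees_mul M mul I) (rees_gens A).

Lemma rees_edge_to_zero (u : Rees I) : E u rees_zero.
Proof. exists rees_zero; split; [left; reflexivity | apply rees_mul_zero_r]. Qed.

Lemma rees_edge_nonzero_pred (u v : Rees I) : E u v -> rees_nonzero v -> rees_nonzero u.
Proof. intros [a [_ <-]] Hv Hu; apply Hv; simpl; rewrite Hu; reflexivity. Qed.

Lemma rees_edge_lift (u v : Rees I) :
  E u v -> rees_nonzero v -> cayley_edge mul A (rees_lift u) (rees_lift v).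
Proof.
  intros [g [Hg <-]] Hn; unfold rees_nonzero in Hn.
  destruct Hg as [<- | Hg]; [rewrite rees_mul_zero_r in Hn; simpl in Hn; congruence|].
  apply in_map_iff in Hg; destruct Hg as [a [<- Ha]].
  destruct u as [[x|] hu]; simpl in *; [|congruence].
  unfold rees_lift, rees_norm in *; simpl in *.
  destruct (excluded_middle_informative (I a)); simpl in *; [congruence|].
  destruct (excluded_middle_informative (I (mul x a))); simpl in *; [congruence|].
  exists a; auto.
Qed.

Lemma rees_proj_edge (x y : M) : cayley_edge mul A x y -> E (rees_proj x) (rees_proj y).
Proof.
  intros [a [Ha <-]]; exists (rees_proj a); split.
  - right; apply in_map, Ha.
  - apply rees_proj_mul.
Qed.

End CayleyGraph.
End ReesQuotient.

Theorem proposition4p8 (M : Type) (mul : M -> M -> M) (one : M) (I : M -> Prop) :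
  is_monoid mul one ->
  finitely_generated mul one ->
  is_ideal mul I ->
  strongly_hyperbolic_monoid mul one ->
  strongly_hyperbolic_monoid (@rees_mul M mul I) (@rees_one M one I).
Proof.
  intros _ _ Hid [A [d [Hgen [Hd Hhyp]]]].
  exists (rees_gens I A), (d + 1); split; [apply rees_generates; auto|split; [lra|]].
  intros p q r Ht.
  destruct (classic (rees_nonzero (path_end r))) as [Hr | Hr].
  - apply (thin_triangle_mono (delta := d)); [lra|].
    exact (thin_triangle_lift (@rees_nonzero M I) (@rees_lift M one I) (rees_proj I)
             (@rees_edge_nonzero_pred M mul I A) (@rees_edge_lift M mul one I A)
             (rees_proj_edge Hid (A := A)) (@rees_proj_lift M one I) Hhyp Ht Hr).
  - apply (thin_triangle_at_sink (rees_edge_to_zero mul A)); [lra | exact Ht |].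
    apply rees_not_nonzero, Hr.
Qed.
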